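(* Let $\Phi$ be a real $N\times d$ matrix satisfying the Restricted Isometry Condition with parameters $(2n,\varepsilon)$, $\varepsilon = 0.03/\sqrt{\log n}$, let $v \ne 0$ be $n$-sparse, $x = \Phi v$, and consider an iteration of ROMP run on $x$ with sparsity level $n$, with $I$ the index set and $r\ne0$ the residual at the start of that iteration, $u = \Phi^* r$, and $J$ the set chosen in the identification step of that iteration. Let $v_0 = v|_{\mathrm{supp}(v)\setminus I}$ (equal to $v$ on $\mathrm{supp}(v)\setminus I$, $0$ elsewhere). Then $\|u|_J\|_2 \ge 0.8\,\|v_0\|_2$.
   Context: A vector is $n$-sparse if it has at most $n$ nonzero coordinates. $\Phi$ satisfies the Restricted Isometry Condition with parameters $(m,\varepsilon)$ if $(1-\varepsilon)\|w\|_2 \le \|\Phi w\|_2 \le (1+\varepsilon)\|w\|_2$ for all $m$-sparse $w$. $y|_T$ is the restriction of $y$ to coordinates in $T$. ROMP with input $x$ and sparsity level $n$: Initialize $I=\emptyset$, $r=x$. Repeat until $r=0$: (Identify) $u=\Phi^*r$, choose a set $J$ of the $n$ biggest coordinates of $u$ in magnitude, or all nonzero coordinates of $u$, whichever set is smaller; (Regularize) among subsets $J_0\subset J$ with $|u(i)|\le 2|u(j)|$ for all $i,j\in J_0$, choose one maximizing $\|u|_{J_0}\|_2$; (Update) $I\leftarrow I\cup J_0$, $y=\operatorname{argmin}_{z\in\mathbb{R}^I}\|x-\Phi z\|_2$, $r=x-\Phi y$. Output $I$. *)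

From HB Require Import structures.
From mathcomp Require Import all_boot all_order all_algebra.
From mathcomp Require Import reals exp.
Set Implicit Arguments. Unset Strict Implicit. Unset Printing Implicit Defensive.
Import Order.TTheory GRing.Theory Num.Theory.
Local Open Scope ring_scope.

Section ROMP.
Variable R : realType.

Definition norm2 (m : nat) (w : 'cV[R]_m) : R :=
  Num.sqrt (\sum_(i < m) w i 0 ^+ 2).

Definition supp (m : nat) (w : 'cV[R]_m) : {set 'I_m} :=
  [set i | w i 0 != 0].

Definition sparse (m n : nat) (w : 'cV[R]_m) : Prop := (#|supp w| <= n)%N.

Definition restrict (m : nat) (T : {set 'I_m}) (w : 'cV[R]_m) : 'cV[R]_m :=
  \col_i (if i \in T then w i 0 else 0).

Definition RIC (N d : nat) (Phi : 'M[R]_(N, d)) (m : nat) (eps : R) : Prop :=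
  forall w : 'cV[R]_d, sparse m w ->
    (1 - eps) * norm2 w <= norm2 (Phi *m w) /\
    norm2 (Phi *m w) <= (1 + eps) * norm2 w.

Definition identify (m n : nat) (u : 'cV[R]_m) (J : {set 'I_m}) : Prop :=
  if (#|supp u| <= n)%N then J = supp u
  else #|J| = n /\
       (forall i j, i \in J -> j \notin J -> `|u j 0| <= `|u i 0|).

Definition comparable_set (m : nat) (u : 'cV[R]_m) (J0 : {set 'I_m}) : Prop :=
  forall i j, i \in J0 -> j \in J0 -> `|u i 0| <= 2 * `|u j 0|.

Definition regularize (m : nat) (u : 'cV[R]_m) (J J0 : {set 'I_m}) : Prop :=
  J0 \subset J /\ comparable_set u J0 /\
  forall J1 : {set 'I_m}, J1 \subset J -> comparable_set u J1 ->
    norm2 (restrict J1 u) <= norm2 (restrict J0 u).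

Definition lsq (N d : nat) (Phi : 'M[R]_(N, d)) (x : 'cV[R]_N)
  (I : {set 'I_d}) (y : 'cV[R]_d) : Prop :=
  supp y \subset I /\
  forall z : 'cV[R]_d, supp z \subset I ->
    norm2 (x - Phi *m y) <= norm2 (x - Phi *m z).

(* (I, r) is the state (index set, residual) at the start of some iteration
   of ROMP run on x with sparsity level n (any admissible tie-breaking). *)
Inductive romp_state (N d : nat) (Phi : 'M[R]_(N, d)) (x : 'cV[R]_N) (n : nat)
  : {set 'I_d} -> 'cV[R]_N -> Prop :=
| romp_init : romp_state Phi x n set0 x
| romp_next : forall I r J J0 y,
    romp_state Phi x n I r -> r != 0 ->
    identify n (Phi^T *m r) J ->
    regularize (Phi^T *m r) J J0 ->
    lsq Phi x (I :|: J0) y ->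
    romp_state Phi x n (I :|: J0) (x - Phi *m y).

End ROMP.

From HB Require Import structures.
From mathcomp Require Import all_boot all_order all_algebra.
From mathcomp Require Import reals exp.
From mathcomp Require Import ring lra zify.
Import Order.TTheory GRing.Theory Num.Theory.
Local Open Scope ring_scope.
Set Implicit Arguments. Unset Strict Implicit. Unset Printing Implicit Defensive.

(* Along any run of ROMP the iterate y is a least-squares fit on I, so the
   residual r = Phi (v - y) is orthogonal to Phi z for every z supported on I,
   and at most half of the indices in I lie outside S = supp v, so that all the
   vectors below are 2n-sparse and the RIC applies to them.  With
   v0 = v|_(S \ I), orthogonality gives <u, v0> = |r|^2 >= (1 - e)^2 |v0|^2,
   hence |u|_(S \ I)| >= (1 - e)^2 |v0| >= 0.8 |v0|, and J, the n largest
   coordinates of u, does at least as well since |S \ I| <= n.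
   The invariant survives an iteration because near-orthogonality bounds u off
   the support, (1 - e) |u|_T| <= 4 e |v0| for T disjoint from S, whereas the
   regularized set keeps a 1/(2 K) share (K ~ log n) of the energy of u|_J: a
   regularized set with more wrong than right indices would force
   (1 - e)^6 <= 160 K e^2, which e = 0.03 / sqrt (log n) rules out. *)

Lemma ler_of_sqr_le_mul (R : realDomainType) (a b : R) :
  0 <= a -> 0 <= b -> a ^+ 2 <= a * b -> a <= b.
Proof. nra. Qed.

Section EuclideanGeometry.
Variables (R : realType) (m : nat).
Implicit Types (p q s w : 'cV[R]_m) (a : R) (A B T : {set 'I_m}).

Definition dotcv p q : R := \sum_(i < m) p i 0 * q i 0.

Lemma norm2_ge0 p : 0 <= norm2 p.
Proof. exact: sqrtr_ge0. Qed.

Lemma dotcvv p : dotcv p p = norm2 p ^+ 2.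
Proof.
rewrite sqr_sqrtr; last by apply: sumr_ge0 => i _; rewrite sqr_ge0.
by apply: eq_bigr => i _; rewrite expr2.
Qed.

Lemma norm2_0 : norm2 (0 : 'cV[R]_m) = 0.
Proof. by rewrite /norm2 big1 ?sqrtr0 // => i _; rewrite mxE expr0n. Qed.

Lemma norm2_eq0 p : (norm2 p == 0) = (p == 0).
Proof.
have sq_ge0 i : 0 <= p i 0 ^+ 2 by rewrite sqr_ge0.
apply/idP/eqP => [|->]; last by rewrite norm2_0.
rewrite sqrtr_eq0 => le0.
have : \sum_(i < m) p i 0 ^+ 2 == 0 by rewrite eq_le le0 sumr_ge0.
rewrite psumr_eq0 // => /allP p0; apply/matrixP => i j; rewrite (ord1 j) mxE.
by move: (p0 i (mem_index_enum _)); rewrite sqrf_eq0 => /eqP.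
Qed.

Lemma dotcvC p q : dotcv p q = dotcv q p.
Proof. by apply: eq_bigr => i _; rewrite mulrC. Qed.

Lemma dotcvDl p q s : dotcv (p + q) s = dotcv p s + dotcv q s.
Proof. by rewrite -big_split; apply: eq_bigr => i _; rewrite !mxE mulrDl. Qed.

Lemma dotcvNl p q : dotcv (- p) q = - dotcv p q.
Proof. by rewrite -sumrN; apply: eq_bigr => i _; rewrite !mxE mulNr. Qed.

Lemma dotcvZl a p q : dotcv (a *: p) q = a * dotcv p q.
Proof. by rewrite mulr_sumr; apply: eq_bigr => i _; rewrite !mxE mulrA. Qed.

Lemma dotcvBl p q s : dotcv (p - q) s = dotcv p s - dotcv q s.
Proof. by rewrite dotcvDl dotcvNl. Qed.

Lemma dotcvDr p q s : dotcv s (p + q) = dotcv s p + dotcv s q.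
Proof. by rewrite dotcvC dotcvDl !(dotcvC s). Qed.

Lemma dotcvNr p q : dotcv q (- p) = - dotcv q p.
Proof. by rewrite dotcvC dotcvNl dotcvC. Qed.

Lemma dotcvZr a p q : dotcv q (a *: p) = a * dotcv q p.
Proof. by rewrite dotcvC dotcvZl dotcvC. Qed.

Lemma dotcvBr p q s : dotcv s (p - q) = dotcv s p - dotcv s q.
Proof. by rewrite dotcvDr dotcvNr. Qed.

Lemma dotcv_delta p i : dotcv p (delta_mx i 0) = p i 0.
Proof.
rewrite /dotcv (bigD1 i) //= big1 ?addr0 => [|j ji]; first by rewrite mxE !eqxx mulr1.
by rewrite mxE (negbTE ji) mulr0.
Qed.

Lemma dotcv0l q : dotcv 0 q = 0.
Proof. by apply: big1 => i _; rewrite mxE mul0r. Qed.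

Lemma norm2_sqrB a p q :
  norm2 (p - a *: q) ^+ 2 = norm2 p ^+ 2 - 2 * a * dotcv p q + a ^+ 2 * norm2 q ^+ 2.
Proof. by rewrite -!dotcvv dotcvBl !dotcvBr !dotcvZl !dotcvZr (dotcvC q p); ring. Qed.

(* Cauchy-Schwarz, from |q|^2 |p - (<p, q> / |q|^2) q|^2 >= 0. *)
Lemma ler_dotcv p q : `|dotcv p q| <= norm2 p * norm2 q.
Proof.
have [q0|q0] := eqVneq q 0; first by rewrite q0 dotcvC dotcv0l normr0 mulr_ge0 ?norm2_ge0.
have nq : 0 < norm2 q by rewrite lt0r norm2_eq0 q0 norm2_ge0.
set D := dotcv p q.
have : 0 <= norm2 (p - (D / norm2 q ^+ 2) *: q) ^+ 2 * norm2 q ^+ 2 by rewrite mulr_ge0 ?sqr_ge0.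
have -> : norm2 (p - (D / norm2 q ^+ 2) *: q) ^+ 2 * norm2 q ^+ 2 =
  (norm2 p * norm2 q) ^+ 2 - D ^+ 2.
  by rewrite norm2_sqrB -/D; field; rewrite gt_eqF.
move=> /[!subr_ge0] h.
by rewrite -ler_sqr ?nnegrE ?normr_ge0 ?mulr_ge0 ?norm2_ge0 // real_normK ?num_real.
Qed.

Lemma suppP w A : reflect (forall i, i \notin A -> w i 0 = 0) (supp w \subset A).
Proof.
apply: (iffP subsetP) => [wA i|wA i]; last by rewrite inE; apply: contraNT => /wA ->.
by apply: contraNeq => wi0; apply: wA; rewrite inE.
Qed.

Lemma sparse_subset k w A : supp w \subset A -> (#|A| <= k)%N -> sparse k w.
Proof. by move=> /subset_leq_card; apply: leq_trans. Qed.

Lemma supp_add p q A B :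
  supp p \subset A -> supp q \subset B -> supp (p + q) \subset A :|: B.
Proof.
move=> /suppP pA /suppP qB; apply/suppP => i; rewrite inE negb_or => /andP[iA iB].
by rewrite mxE pA // qB // addr0.
Qed.

Lemma supp_opp p : supp (- p) = supp p.
Proof. by apply/setP => i; rewrite !inE mxE oppr_eq0. Qed.

Lemma supp_scale a p A : supp p \subset A -> supp (a *: p) \subset A.
Proof. by move=> /suppP pA; apply/suppP => i iA; rewrite mxE pA ?mulr0. Qed.

Lemma supp_restrict T w : supp (restrict T w) \subset T.
Proof. by apply/suppP => i iT; rewrite mxE (negbTE iT). Qed.

Lemma dotcv_disjoint p q A B :
  supp p \subset A -> supp q \subset B -> [disjoint A & B] -> dotcv p q = 0.
Proof.
move=> /suppP pA /suppP qB AB; apply: big1 => i _.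
have [iA|iA] := boolP (i \in A); last by rewrite pA ?mul0r.
by rewrite qB ?mulr0 // (disjointFr AB iA).
Qed.

Lemma dotcv_restrict T p q : supp q \subset T -> dotcv (restrict T p) q = dotcv p q.
Proof.
move=> /suppP qT; apply: eq_bigr => i _; rewrite mxE.
by case: ifP => // /negbT /qT ->; rewrite !mulr0.
Qed.

Lemma norm2_restrict T w : norm2 (restrict T w) ^+ 2 = \sum_(i in T) w i 0 ^+ 2.
Proof.
rewrite -dotcvv big_mkcond; apply: eq_bigr => i _; rewrite mxE.
by case: ifP; rewrite ?mul0r // expr2.
Qed.

Lemma normr_le_norm2_restrict T w i : i \in T -> `|w i 0| <= norm2 (restrict T w).
Proof.
move=> iT; rewrite -ler_sqr ?nnegrE ?norm2_ge0 // real_normK ?num_real // norm2_restrict.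
by rewrite (bigD1 i) //= lerDl sumr_ge0 // => j _; rewrite sqr_ge0.
Qed.

Lemma norm2_restrict_le T w : norm2 (restrict T w) <= norm2 w.
Proof.
rewrite -ler_sqr ?nnegrE ?norm2_ge0 // norm2_restrict -dotcvv big_mkcond.
by apply: ler_sum => i _; case: ifP => _; rewrite -expr2 ?sqr_ge0.
Qed.

End EuclideanGeometry.

Lemma dotcv_mulmx (R : realType) N d (A : 'M[R]_(N, d)) p q :
  dotcv (A *m p) q = dotcv p (A^T *m q).
Proof.
have dotcvE m (p' q' : 'cV[R]_m) : dotcv p' q' = (p'^T *m q') 0 0.
  by rewrite mxE; apply: eq_bigr => i _; rewrite mxE.
by rewrite !dotcvE trmx_mul mulmxA.
Qed.

Section RestrictedIsometry.
Variables (R : realType) (N d k : nat) (Phi : 'M[R]_(N, d)) (e : R).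
Hypotheses (ric : RIC Phi k e) (e_ge0 : 0 <= e) (e_le1 : e <= 1).
Implicit Types (p q w : 'cV[R]_d) (A B : {set 'I_d}).

Lemma ric_sqr w : sparse k w ->
  (1 - e) ^+ 2 * norm2 w ^+ 2 <= norm2 (Phi *m w) ^+ 2 <= (1 + e) ^+ 2 * norm2 w ^+ 2.
Proof.
move=> /ric[lo hi]; rewrite -!exprMn; apply/andP; split; rewrite ler_sqr ?nnegrE //;
  by rewrite ?norm2_ge0 ?mulr_ge0 ?norm2_ge0 ?subr_ge0 ?addr_ge0.
Qed.

(* Polarization: 4 <Phi p, Phi q> = |Phi (p + q)|^2 - |Phi (p - q)|^2. *)
Lemma ric_dotcv_le_sum p q A B :
  supp p \subset A -> supp q \subset B -> [disjoint A & B] -> (#|A :|: B| <= k)%N ->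
  dotcv (Phi *m p) (Phi *m q) <= e * (norm2 p ^+ 2 + norm2 q ^+ 2).
Proof.
move=> pA qB AB cardAB.
have pq0 : dotcv p q = 0 := dotcv_disjoint pA qB AB.
have /ric_sqr/andP[_] : sparse k (p + q) by apply: sparse_subset (supp_add pA qB) _.
have /ric_sqr/andP[+ _] : sparse k (p - q).
  by apply: sparse_subset cardAB; apply: supp_add; rewrite ?supp_opp.
rewrite -!dotcvv mulmxBr mulmxDr !(dotcvDl, dotcvDr, dotcvNl, dotcvNr).
rewrite (dotcvC q p) pq0 (dotcvC (Phi *m q)) !dotcvv; nra.
Qed.

Lemma ric_dotcv_le p q A B :
  supp p \subset A -> supp q \subset B -> [disjoint A & B] -> (#|A :|: B| <= k)%N ->
  dotcv (Phi *m p) (Phi *m q) <= 2 * e * norm2 p * norm2 q.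
Proof.
move=> pA qB AB cardAB.
have norm2Z a w : norm2 (a *: w) ^+ 2 = a ^+ 2 * norm2 w ^+ 2.
  by rewrite -!dotcvv dotcvZl dotcvZr mulrA -expr2.
have [->|p0] := eqVneq p 0; first by rewrite mulmx0 dotcv0l norm2_0 ?mulr0 ?mul0r.
have [->|q0] := eqVneq q 0.
  by rewrite mulmx0 dotcvC dotcv0l norm2_0 ?mulr0 ?mul0r.
have np : 0 < norm2 p by rewrite lt0r norm2_eq0 p0 norm2_ge0.
have nq : 0 < norm2 q by rewrite lt0r norm2_eq0 q0 norm2_ge0.
have := ric_dotcv_le_sum (supp_scale (norm2 q) pA) (supp_scale (norm2 p) qB) AB cardAB.
rewrite -!scalemxAr dotcvZl dotcvZr !norm2Z mulrA.
have -> : e * (norm2 q ^+ 2 * norm2 p ^+ 2 + norm2 p ^+ 2 * norm2 q ^+ 2) =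
  norm2 q * norm2 p * (2 * e * norm2 p * norm2 q) by ring.
by rewrite ler_pM2l ?mulr_gt0.
Qed.

End RestrictedIsometry.

Section LeastSquares.
Variables (R : realType) (N d : nat) (Phi : 'M[R]_(N, d)) (x : 'cV[R]_N).
Variables (I : {set 'I_d}) (y : 'cV[R]_d).
Hypothesis y_lsq : lsq Phi x I y.

Lemma lsq_residual_orth z : supp z \subset I -> dotcv (x - Phi *m y) (Phi *m z) = 0.
Proof.
move=> zI; case: y_lsq => yI y_min.
set D := dotcv _ _; set Q := norm2 (Phi *m z) ^+ 2.
have descent t : 2 * t * D <= t ^+ 2 * Q.
  have /y_min : supp (y + t *: z) \subset I by rewrite -(setUid I) supp_add ?supp_scale.
  rewrite -ler_sqr ?nnegrE ?norm2_ge0 // mulmxDr -scalemxAr opprD addrA norm2_sqrB.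
  by rewrite -/D -/Q; lra.
have Q0 : 0 <= Q by rewrite sqr_ge0.
(* The step t = D / (Q + 1) rather than D / Q also covers Q = 0. *)
have Q1 : Q + 1 != 0 by rewrite gt_eqF ?ltr_wpDl.
have := ler_wpM2l (sqr_ge0 (Q + 1)) (descent (D / (Q + 1))).
have -> : (Q + 1) ^+ 2 * (2 * (D / (Q + 1)) * D) = 2 * D ^+ 2 * (Q + 1) by field.
have -> : (Q + 1) ^+ 2 * ((D / (Q + 1)) ^+ 2 * Q) = D ^+ 2 * Q by field.
move=> le_DQ; apply/eqP; rewrite -sqrf_eq0 eq_le sqr_ge0 andbT; nra.
Qed.

Lemma lsq_residual_corr_eq0 i : i \in I -> (Phi^T *m (x - Phi *m y)) i 0 = 0.
Proof.
move=> iI; rewrite -dotcv_delta dotcvC -dotcv_mulmx dotcvC lsq_residual_orth //.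
by apply/suppP => j jI; rewrite mxE; case: eqP jI => // ->; rewrite iI.
Qed.

End LeastSquares.

Lemma lsq_set0 (R : realType) N d (Phi : 'M[R]_(N, d)) (x : 'cV[R]_N) : lsq Phi x set0 0.
Proof.
split=> [|z /suppP z0]; first by apply/suppP => i _; rewrite mxE.
by rewrite (_ : z = 0) // ; apply/matrixP => i j; rewrite (ord1 j) mxE z0 ?inE.
Qed.

Lemma ler_sum_card (R : realType) (T : finType) (X Y : {set T}) (f g : T -> R) :
  (#|X| <= #|Y|)%N -> (forall x y, x \in X -> y \in Y -> f x <= g y) ->
  (forall y, 0 <= g y) -> \sum_(x in X) f x <= \sum_(y in Y) g y.
Proof.
move=> XY fg g0; have [Y0|Y0] := posnP #|Y|.
  by rewrite (cards0_eq Y0) (cards0_eq (_ : #|X| = 0%N)) ?big_set0 //; lia.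
rewrite -(ler_pMn2r Y0) -sumrMnl.
apply: le_trans (_ : _ <= \sum_(x in X) \sum_(y in Y) g y) _.
  by apply: ler_sum => x Xx; rewrite -sumr_const; apply: ler_sum => y Yy; apply: fg.
by rewrite sumr_const ler_wpMn2l ?sumr_ge0.
Qed.

Section Identification.
Variables (R : realType) (m n : nat) (u : 'cV[R]_m) (J : {set 'I_m}).
Hypothesis J_id : identify n u J.

Lemma identify_card : (#|J| <= n)%N.
Proof. by move: J_id; rewrite /identify; case: ifP => [? ->|_ []->]. Qed.

Lemma identify_subset_supp : J \subset supp u.
Proof.
move: J_id; rewrite /identify; case: ifP => [_ ->|/negbT]; first exact: subxx.
rewrite -ltnNge => n_lt [cardJ J_max].
have [j /andP[jJ ju]] : exists j, (j \notin J) && (j \in supp u).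
  apply/existsP; apply: contraTT n_lt => /existsPn noj; rewrite -leqNgt -cardJ.
  by apply/subset_leq_card/subsetP => j ju; move: (noj j); rewrite ju andbT negbK.
apply/subsetP => i iJ; move: ju; rewrite !inE; apply: contraNneq => ui0.
by move: (J_max i j iJ jJ); rewrite ui0 normr0 normr_le0.
Qed.

Lemma identify_max (B : {set 'I_m}) : (#|B| <= n)%N -> norm2 (restrict B u) <= norm2 (restrict J u).
Proof.
move=> cardB; rewrite -ler_sqr ?nnegrE ?norm2_ge0 // !norm2_restrict.
move: J_id; rewrite /identify; case: ifP => [_ ->|_ [cardJ J_max]].
  rewrite [X in X <= _]big_mkcond [X in _ <= X]big_mkcond /=.
  apply: ler_sum => i _; case: (boolP (i \in supp u)); case: (i \in B) => //; rewrite ?sqr_ge0 //.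
  by rewrite inE negbK => /eqP ->; rewrite expr0n.
rewrite (big_setID J) [X in _ <= X](big_setID B) /= setIC lerD2l.
apply: ler_sum_card => [|i j|j]; rewrite ?sqr_ge0 //.
  by rewrite -(leq_add2l #|B :&: J|) cardsID setIC cardsID cardJ.
rewrite !inE => /andP[iJ _] /andP[_ jJ].
rewrite -(real_normK (num_real (u i 0))) -(real_normK (num_real (u j 0))).
by rewrite lerXn2r ?nnegrE ?normr_ge0 ?J_max.
Qed.

End Identification.

Lemma exists_ler_mean (R : realType) K (F : 'I_K -> R) :
  (0 < K)%N -> exists k, \sum_(j < K) F j <= K%:R * F k.
Proof.
move=> K_gt0; apply/existsP; apply: contraT => /existsPn small.
suff : \sum_(j < K) K%:R * F j < \sum_(j < K) \sum_(i < K) F i.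
  by rewrite -mulr_sumr sumr_const card_ord mulr_natl ltxx.
apply: ltr_sum => [|k _]; last by rewrite ltNge small.
by apply/hasP; exists (Ordinal K_gt0); rewrite ?mem_index_enum.
Qed.

Lemma exists_dyadic_scale (R : realType) K (x s : R) : x <= s -> s < 2 ^+ K * x ->
  exists k, [/\ (k < K)%N, 2 ^+ k * x <= s & s < 2 ^+ k.+1 * x].
Proof.
move=> xs; elim: K => [|K IH] sK; first by rewrite mul1r ltNge xs in sK.
have [/IH[k [kK ks sk]]|Ks] := ltP s (2 ^+ K * x); last by exists K.
by exists k; split => //; apply: ltnW.
Qed.

Section Regularization.
Variables (R : realType) (m : nat) (u : 'cV[R]_m).
Implicit Types (J S : {set 'I_m}).

Definition dyadic_band J (s : R) (k : nat) : {set 'I_m} :=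
  [set i in J | (2 ^+ k * `|u i 0| <= s) && (s < 2 ^+ k.+1 * `|u i 0|)].

Lemma comparable_dyadic_band J s k : comparable_set u (dyadic_band J s k).
Proof.
move=> i j; rewrite !inE => /and3P[_ ki _] /and3P[_ _ kj].
rewrite -(ler_pM2l (exprn_gt0 k (ltr0Sn R 1))) mulrA -exprSr.
exact/ltW/(le_lt_trans ki kj).
Qed.

(* Coordinates below s / 2 ^ K, s = |u|_J|, carry at most half of s ^ 2 as there
   are at most n <= 4 ^ K / 2 of them; every other coordinate of J lies in one of
   the first K bands. *)
Lemma norm2_restrict_dyadic_bands J n K : (#|J| <= n)%N -> (2 * n <= 4 ^ K)%N ->
  norm2 (restrict J u) ^+ 2 <=
    2 * \sum_(k < K) norm2 (restrict (dyadic_band J (norm2 (restrict J u)) k) u) ^+ 2.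
Proof.
move=> cardJ nK; set s := norm2 (restrict J u).
pose small := [set i in J | 2 ^+ K * `|u i 0| <= s].
have cover i : (if i \in J then u i 0 ^+ 2 else 0) <=
    \sum_(k < K) (if i \in dyadic_band J s k then u i 0 ^+ 2 else 0) +
    (if i \in small then u i 0 ^+ 2 else 0).
  have bands_ge0 : 0 <= \sum_(k < K) (if i \in dyadic_band J s k then u i 0 ^+ 2 else 0).
    by apply: sumr_ge0 => k _; case: ifP; rewrite ?sqr_ge0.
  rewrite inE; case: (boolP (i \in J)) => iJ /=; first last.
    by rewrite addr_ge0 ?lexx.
  have [_|sK] := leP (2 ^+ K * `|u i 0|) s; first by rewrite lerDr.
  have [k [kK ks sk]] := exists_dyadic_scale (normr_le_norm2_restrict u iJ) sK.
  rewrite addr0 (bigD1 (Ordinal kK)) //= inE iJ ks sk lerDl.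
  by apply: sumr_ge0 => k' _; case: ifP; rewrite ?sqr_ge0.
have small_energy : 4 ^+ K * \sum_(i in small) u i 0 ^+ 2 <= n%:R * s ^+ 2.
  rewrite mulr_sumr; apply: le_trans (_ : _ <= \sum_(i in small) s ^+ 2) _.
    apply: ler_sum => i; rewrite inE => /andP[_ small_i].
    rewrite -(real_normK (num_real (u i 0))) (_ : 4 = 2 ^+ 2) 1?exprAC -?exprMn.
      by rewrite lerXn2r ?nnegrE ?mulr_ge0 ?exprn_ge0 ?normr_ge0 ?norm2_ge0.
    by rewrite expr2; lra.
  rewrite sumr_const mulr_natl; apply: ler_wpMn2l; first exact: sqr_ge0.
  by apply: leq_trans cardJ; apply/subset_leq_card/subsetP => i; rewrite inE => /andP[].
have total : s ^+ 2 <= \sum_(k < K) norm2 (restrict (dyadic_band J s k) u) ^+ 2 +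
    \sum_(i in small) u i 0 ^+ 2.
  rewrite {1}/s norm2_restrict big_mkcond; apply: le_trans (ler_sum _ (fun i _ => cover i)) _.
  rewrite big_split /= exchange_big /= [X in _ <= _ + X]big_mkcond lerD2r.
  by apply: ler_sum => k _; rewrite norm2_restrict [X in _ <= X]big_mkcond.
have /(ler_wpM2r (sqr_ge0 s)) : 2 * n%:R <= 4 ^+ K :> R.
  by rewrite -(ler_nat R) natrM natrX in nK.
have : 0 < 4 ^+ K :> R by rewrite exprn_gt0.
nra.
Qed.

Lemma regularize_energy J (J0 : {set 'I_m}) n K : regularize u J J0 ->
  (#|J| <= n)%N -> (0 < K)%N -> (2 * n <= 4 ^ K)%N ->
  norm2 (restrict J u) ^+ 2 <= 2 * K%:R * norm2 (restrict J0 u) ^+ 2.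
Proof.
move=> [_ [_ J0_max]] cardJ K_gt0 nK.
have [k bandk] := exists_ler_mean
  (fun k : 'I_K => norm2 (restrict (dyadic_band J (norm2 (restrict J u)) k) u) ^+ 2) K_gt0.
apply: le_trans (norm2_restrict_dyadic_bands cardJ nK) _.
rewrite -mulrA ler_wpM2l //; apply: le_trans bandk _; rewrite ler_wpM2l ?ler0n //.
rewrite ler_sqr ?nnegrE ?norm2_ge0 //; apply: J0_max; last exact: comparable_dyadic_band.
by apply/subsetP => i; rewrite inE => /andP[].
Qed.

(* Every squared coordinate on [J0 :&: S] is at most 4 times any one on [J0 :\: S]. *)
Lemma comparable_energy_setD (J0 : {set 'I_m}) S : comparable_set u J0 ->
  (#|J0 :&: S| <= #|J0 :\: S|)%N ->
  norm2 (restrict J0 u) ^+ 2 <= 5 * norm2 (restrict (J0 :\: S) u) ^+ 2.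
Proof.
move=> J0_comp card_le; rewrite !norm2_restrict (big_setID S) /=.
suff : \sum_(i in J0 :&: S) u i 0 ^+ 2 <= \sum_(j in J0 :\: S) 4 * u j 0 ^+ 2.
  by rewrite -mulr_sumr; lra.
apply: ler_sum_card => // [i j|j]; last by rewrite mulr_ge0 ?sqr_ge0.
rewrite !inE => /andP[iJ0 _] /andP[_ jJ0].
rewrite -(real_normK (num_real (u i 0))) -(real_normK (num_real (u j 0))).
rewrite (_ : 4 = 2 ^+ 2) -?exprMn; last by rewrite expr2; lra.
by rewrite lerXn2r ?nnegrE ?mulr_ge0 ?normr_ge0 ?J0_comp.
Qed.

End Regularization.

Section Constants.
Variables (R : realType) (n : nat).
Hypothesis n_gt1 : (1 < n)%N.

Definition romp_eps : R := (3%:R / 100%:R) / Num.sqrt (ln n%:R).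

Lemma ln2_ge_half : 1 / 2 <= ln (2 : R).
Proof.
have := @le_ln1Dx R (- (1 / 2)) ltac:(lra).
by rewrite (_ : 1 + - (1 / 2) = 2^-1 :> R) ?lnV ?posrE //; lra.
Qed.

Lemma trunc_log_le_ln : (trunc_log 2 n)%:R / 2 <= ln n%:R :> R.
Proof.
have le_n : (2 ^+ trunc_log 2 n : R) <= n%:R by rewrite -natrX ler_nat trunc_logP // ltnW.
have := le_n; rewrite -ler_ln ?posrE ?exprn_gt0 ?ltr0n ?(ltnW n_gt1) // lnXn // -[ln _ *+ _]mulr_natr.
have := ln2_ge_half; have : 0 <= (trunc_log 2 n)%:R :> R by rewrite ler0n.
nra.
Qed.

Lemma ln_ge_half : 1 / 2 <= ln n%:R :> R.
Proof.
apply: le_trans trunc_log_le_ln; rewrite ler_pM2r ?invr_gt0 // ler1n trunc_log_gt0 //.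
Qed.

Lemma romp_eps_sqr_ln : romp_eps ^+ 2 * ln n%:R = 9 / 10000.
Proof.
have L_gt0 : 0 < ln n%:R :> R by apply: lt_le_trans ln_ge_half; lra.
by rewrite expr_div_n sqr_sqrtr ?ltW // mulfVK ?gt_eqF //; lra.
Qed.

Lemma romp_eps_ge0 : 0 <= romp_eps.
Proof. by rewrite /romp_eps !divr_ge0 ?ler0n ?sqrtr_ge0. Qed.

Lemma romp_eps_le : romp_eps <= 1 / 20.
Proof.
have := romp_eps_sqr_ln; have := ln_ge_half; have := romp_eps_ge0; nra.
Qed.

(* K = log2 n + 1 <= 4 ln n and e ^ 2 ln n = 0.0009 give 160 K e ^ 2 <= 0.576 < 0.95 ^ 6. *)
Lemma romp_eps_small : 160 * (trunc_log 2 n).+1%:R * romp_eps ^+ 2 < (1 - romp_eps) ^+ 6.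
Proof.
have := trunc_log_le_ln; have := ln_ge_half; have := romp_eps_sqr_ln; have := romp_eps_le.
set e := romp_eps; set L := ln _; set k := (trunc_log 2 n)%:R => e_le eL L2 kL.
have K_le : 160 * (trunc_log 2 n).+1%:R * e ^+ 2 <= 576 / 1000.
  have : (1 + k) * e ^+ 2 <= 4 * L * e ^+ 2 by apply: ler_wpM2r; [exact: sqr_ge0 | lra].
  by rewrite -natr1 addrC; lra.
have e6 : (19 / 20) ^+ 6 <= (1 - e) ^+ 6 by rewrite lerXn2r ?nnegrE; lra.
have c6 : 576 / 1000 < (19 / 20) ^+ 6 :> R by rewrite !exprS expr0; lra.
exact: le_lt_trans K_le (lt_le_trans c6 e6).
Qed.

End Constants.


Lemma trunc_log2_dyadic n : (2 * n <= 4 ^ (trunc_log 2 n).+1)%N.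
Proof.
have := trunc_log_ltn n (isT : (1 < 2)%N); rewrite (_ : 4 = 2 * 2)%N // expnMn.
set P := (2 ^ _)%N => nP; have P2 : (2 <= P)%N by rewrite /P expnS leq_pmulr ?expn_gt0.
by rewrite [(2 * n)%N]mulnC leq_mul // ltnW.
Qed.

(* The ROMP invariant: at most half of the indices in A lie outside S. *)
Definition balanced (T : finType) (S A : {set T}) : bool := (#|A :\: S| <= #|A :&: S|)%N.

Lemma card_setU_balanced (T : finType) (S A : {set T}) :
  balanced S A -> (#|S :|: A| <= 2 * #|S|)%N.
Proof.
rewrite /balanced => bal.
have := cardsU S A; have := cardsID S A; rewrite setIC.
have : (#|A :&: S| <= #|S|)%N by apply/subset_leq_card/subsetIr.
lia.
Qed.

Lemma balancedU (T : finType) (S A B : {set T}) : [disjoint A & B] ->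
  balanced S A -> balanced S B -> balanced S (A :|: B).
Proof.
rewrite /balanced setDUl setIUl => AB bA bB.
have /eqP-> : #|(A :&: S) :|: (B :&: S)| == (#|A :&: S| + #|B :&: S|)%N.
  by rewrite (leq_card_setU _ _).2 (disjointW (subsetIl _ _) (subsetIl _ _) AB).
by apply: leq_trans (leq_card_setU _ _) _; apply: leq_add.
Qed.

Lemma romp_energy_chain (R : realFieldType) (e K V a b c : R) :
  0 <= e -> e <= 1 -> 0 <= K -> 0 <= V -> 0 <= c ->
  (1 - e) ^+ 2 * V <= a -> a ^+ 2 <= 2 * K * b ^+ 2 -> b ^+ 2 <= 5 * c ^+ 2 ->
  (1 - e) * c <= 4 * e * V -> (1 - e) ^+ 6 * V ^+ 2 <= 160 * K * e ^+ 2 * V ^+ 2.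
Proof.
move=> e0 e1 K0 V0 c0 aV ab bc cV; have e1' : 0 <= 1 - e by rewrite subr_ge0.
have sqJ : (1 - e) ^+ 4 * V ^+ 2 <= a ^+ 2.
  by rewrite (_ : 4 = 2 * 2)%N // exprM -exprMn lerXn2r ?nnegrE ?mulr_ge0 ?sqr_ge0 ?(le_trans _ aV) ?mulr_ge0 ?sqr_ge0.
have sqT : (1 - e) ^+ 2 * c ^+ 2 <= 16 * e ^+ 2 * V ^+ 2.
  rewrite (_ : 16 * e ^+ 2 * V ^+ 2 = (4 * e * V) ^+ 2); last by rewrite !exprMn; congr (_ * _ * _); rewrite expr2; lra.
  by rewrite -exprMn lerXn2r ?nnegrE ?mulr_ge0.
have e2 : 0 <= (1 - e) ^+ 2 := sqr_ge0 _.
have := ler_wpM2l e2 sqJ; have := ler_wpM2l e2 ab.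
have := ler_wpM2l e2 (ler_wpM2l (mulr_ge0 (ler0n _ 2) K0) bc).
have := ler_wpM2l (mulr_ge0 (ler0n _ 10) K0) sqT.
lra.
Qed.

Section ResidualCorrelation.
Variables (R : realType) (N d n : nat) (Phi : 'M[R]_(N, d)) (e : R).
Variables (v : 'cV[R]_d) (I : {set 'I_d}) (y : 'cV[R]_d).
Hypotheses (ric : RIC Phi (2 * n) e) (e_ge0 : 0 <= e) (e_le1 : e <= 1).
Hypotheses (v_sparse : sparse n v) (y_lsq : lsq Phi (Phi *m v) I y).
Hypothesis I_bal : balanced (supp v) I.

Local Notation S := (supp v).
Local Notation v0 := (restrict (supp v :\: I) v).
Local Notation r := (Phi *m v - Phi *m y).
Local Notation u := (Phi^T *m (Phi *m v - Phi *m y)).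

Let one_sub_e_ge0 : 0 <= 1 - e. Proof. by rewrite subr_ge0. Qed.

Lemma card_supp_setU : (#|S :|: I| <= 2 * n)%N.
Proof. by apply: leq_trans (card_setU_balanced I_bal) _; rewrite leq_mul2l. Qed.

Lemma card_suppD : (#|S :\: I| <= n)%N.
Proof. exact/(leq_trans _ v_sparse)/subset_leq_card/subsetDl. Qed.

Lemma supp_v_sub_v0 : supp (v - v0) \subset I.
Proof.
apply/suppP => i iI; rewrite !mxE !inE (negbTE iI) /=.
by case: (v i 0 =P 0) => [->|]; rewrite subrr.
Qed.

Lemma dotcv_corr_v0 : dotcv u v0 = norm2 r ^+ 2.
Proof.
have [yI _] := y_lsq.
rewrite dotcvC -dotcv_mulmx -dotcvv dotcvC.
have -> : Phi *m v0 = Phi *m v - Phi *m (v - v0) by rewrite mulmxBr opprB addrC subrK.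
rewrite dotcvBr (lsq_residual_orth y_lsq supp_v_sub_v0) subr0.
by rewrite [in RHS]dotcvBr (lsq_residual_orth y_lsq yI) subr0.
Qed.

Lemma norm2_residual_ge : (1 - e) * norm2 v0 <= norm2 r.
Proof.
have [yI _] := y_lsq.
have vy : supp (v - y) \subset S :|: I by rewrite supp_add ?supp_opp.
have [+ _] := ric (sparse_subset vy card_supp_setU); rewrite mulmxBr; apply: le_trans.
have -> : v0 = restrict (S :\: I) (v - y).
  apply/matrixP => i j; rewrite (ord1 j) !mxE !inE.
  by case: (boolP (i \in I)) => //= iI; rewrite (suppP _ _ yI i) ?subr0.
by rewrite ler_wpM2l ?norm2_restrict_le.
Qed.

Lemma sqr_norm2_residual_le : norm2 r ^+ 2 <= norm2 (restrict (S :\: I) u) * norm2 v0.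
Proof.
rewrite -dotcv_corr_v0 -(dotcv_restrict _ (supp_restrict _ _)).
exact: le_trans (ler_norm _) (ler_dotcv _ _).
Qed.

Lemma norm2_v0_gt0 : r != 0 -> 0 < norm2 v0.
Proof.
move=> r0; rewrite lt0r norm2_ge0 andbT; apply: contra r0 => /eqP v00.
have := sqr_norm2_residual_le; rewrite v00 mulr0 -norm2_eq0 => r_le0.
by rewrite -sqrf_eq0 eq_le r_le0 sqr_ge0.
Qed.

Lemma norm2_corr_suppD_ge : (1 - e) ^+ 2 * norm2 v0 <= norm2 (restrict (S :\: I) u).
Proof.
have [->|v0_neq0] := eqVneq (norm2 v0) 0; first by rewrite mulr0 norm2_ge0.
have v0_gt0 : 0 < norm2 v0 by rewrite lt0r v0_neq0 norm2_ge0.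
rewrite -(ler_pM2r v0_gt0); apply: le_trans sqr_norm2_residual_le.
have -> : (1 - e) ^+ 2 * norm2 v0 * norm2 v0 = ((1 - e) * norm2 v0) ^+ 2 by ring.
by rewrite lerXn2r ?nnegrE ?mulr_ge0 ?norm2_ge0 ?norm2_residual_ge.
Qed.

Lemma disjoint_supp_corr : [disjoint supp u & I].
Proof.
rewrite disjoint_sym disjoint_subset; apply/subsetP => i iI.
by rewrite !inE negbK (lsq_residual_corr_eq0 y_lsq iI).
Qed.

(* As y vanishes off I and v - v0 = v|_I, z is the error of y on I. *)
Local Notation z := (y - (v - v0)).

Lemma supp_lsq_error : supp z \subset I.
Proof.
have [yI _] := y_lsq; have v_v0 : supp (- (v - v0)) \subset I by rewrite supp_opp supp_v_sub_v0.
by have := supp_add yI v_v0; rewrite setUid.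
Qed.

Lemma residual_split : r = Phi *m v0 - Phi *m z.
Proof. by rewrite !mulmxBr opprB addrCA addrA subrK. Qed.

Lemma disjoint_I_suppD : [disjoint I & S :\: I].
Proof. by rewrite disjoint_sym disjoint_subset; apply/subsetP => i; rewrite !inE => /andP[]. Qed.

Lemma card_I_suppD : (#|I :|: (S :\: I)| <= 2 * n)%N.
Proof.
apply: leq_trans card_supp_setU; apply/subset_leq_card/subsetP => i.
by rewrite !inE => /orP[->|/andP[_ ->]]; rewrite ?orbT.
Qed.

Lemma sparse_lsq_error : sparse (2 * n) z.
Proof.
apply: sparse_subset supp_lsq_error _.
by apply: leq_trans card_supp_setU; apply/subset_leq_card/subsetUr.
Qed.

Lemma norm2_proj_error_le : (1 - e) * norm2 (Phi *m z) <= 2 * e * norm2 v0.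
Proof.
have orth : norm2 (Phi *m z) ^+ 2 = dotcv (Phi *m z) (Phi *m v0).
  have /eqP := lsq_residual_orth y_lsq supp_lsq_error.
  by rewrite residual_split dotcvBl subr_eq0 dotcvC dotcvv => /eqP.
have cross := ric_dotcv_le ric e_ge0 e_le1 supp_lsq_error (supp_restrict (S :\: I) v)
  disjoint_I_suppD card_I_suppD.
have [lo _] := ric sparse_lsq_error.
set Z := norm2 (Phi *m z) in orth lo *; set V := norm2 v0 in cross *.
apply: ler_of_sqr_le_mul; rewrite ?mulr_ge0 ?norm2_ge0 //.
have h1 : (1 - e) ^+ 2 * Z ^+ 2 <= (1 - e) ^+ 2 * (2 * e * norm2 z * V).
  by rewrite ler_wpM2l ?sqr_ge0 // orth.
have h2 : (1 - e) * (2 * e * V) * ((1 - e) * norm2 z) <= (1 - e) * (2 * e * V) * Z.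
  by rewrite ler_wpM2l ?mulr_ge0 ?norm2_ge0.
lra.
Qed.

Lemma norm2_corr_offsupp_le (T : {set 'I_d}) : [disjoint T & S] -> (#|T| <= n)%N ->
  (1 - e) * norm2 (restrict T u) <= 4 * e * norm2 v0.
Proof.
move=> TS cardT; set a := restrict T u.
have Ta : supp a \subset T := supp_restrict _ _.
have TSI : [disjoint T & S :\: I] by apply: disjointWr TS; apply: subsetDl.
have cardTSI : (#|T :|: (S :\: I)| <= 2 * n)%N.
  by apply: leq_trans (leq_card_setU _ _) _; rewrite mul2n -addnn leq_add ?card_suppD.
have cross := ric_dotcv_le ric e_ge0 e_le1 Ta (supp_restrict (S :\: I) v) TSI cardTSI.
have [_ hi] := ric (sparse_subset Ta (leq_trans cardT (leq_pmull _ (isT : (0 < 2)%N)))).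
have energy : norm2 a ^+ 2 = dotcv (Phi *m a) (Phi *m v0) - dotcv (Phi *m a) (Phi *m z).
  by rewrite -dotcvBr -residual_split dotcv_mulmx dotcvC -(dotcv_restrict _ Ta) dotcvv.
have proj : - dotcv (Phi *m a) (Phi *m z) <= norm2 (Phi *m a) * norm2 (Phi *m z).
  by apply: le_trans (ler_norm _) _; rewrite normrN ler_dotcv.
have a_le : norm2 a <= 2 * e * norm2 v0 + (1 + e) * norm2 (Phi *m z).
  apply: ler_of_sqr_le_mul; rewrite ?addr_ge0 ?mulr_ge0 ?norm2_ge0 ?addr_ge0 //.
  have := ler_wpM2r (norm2_ge0 (Phi *m z)) hi; lra.
have := ler_wpM2l one_sub_e_ge0 a_le; have := ler_wpM2l (addr_ge0 ler01 e_ge0) norm2_proj_error_le.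
lra.
Qed.

Section Step.
Variables (K : nat) (J J0 : {set 'I_d}).
Hypotheses (K_gt0 : (0 < K)%N) (nK : (2 * n <= 4 ^ K)%N).
Hypothesis eK : 160 * K%:R * e ^+ 2 < (1 - e) ^+ 6.
Hypotheses (r_neq0 : r != 0) (J_id : identify n u J) (J0_reg : regularize u J J0).

Lemma balanced_regularize : balanced S J0.
Proof.
rewrite /balanced leqNgt; apply/negP => /ltnW le_card; set T := J0 :\: S.
have [J0J [J0_comp _]] := J0_reg.
have V_gt0 := norm2_v0_gt0 r_neq0; set V := norm2 v0 in V_gt0.
have V0 := ltW V_gt0.
have uJ : (1 - e) ^+ 2 * V <= norm2 (restrict J u).
  exact: le_trans norm2_corr_suppD_ge (identify_max J_id card_suppD).
have uJ0 := regularize_energy J0_reg (identify_card J_id) K_gt0 nK.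
have uT := comparable_energy_setD J0_comp le_card.
have uT' : (1 - e) * norm2 (restrict T u) <= 4 * e * V.
  apply: norm2_corr_offsupp_le; first by rewrite disjoint_subset; apply/subsetP => i; rewrite !inE => /andP[].
  apply: leq_trans (identify_card J_id); apply/subset_leq_card.
  exact: subset_trans (subsetDl _ _) J0J.
have := romp_energy_chain e_ge0 e_le1 (ler0n _ K) V0 (norm2_ge0 _) uJ uJ0 uT uT'.
by rewrite ler_pM2r ?exprn_gt0 // leNgt eK.
Qed.

Lemma balanced_step : balanced S (I :|: J0).
Proof.
have [J0J _] := J0_reg.
apply: balancedU I_bal balanced_regularize; rewrite disjoint_sym.
exact: disjointWl (subset_trans J0J (identify_subset_supp J_id)) disjoint_supp_corr.
Qed.

End Step.

End ResidualCorrelation.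

Lemma romp_state_invariant (R : realType) N d n (Phi : 'M[R]_(N, d)) e K (v : 'cV[R]_d) I r :
  RIC Phi (2 * n) e -> 0 <= e -> e <= 1 -> (0 < K)%N -> (2 * n <= 4 ^ K)%N ->
  160 * K%:R * e ^+ 2 < (1 - e) ^+ 6 -> sparse n v ->
  romp_state Phi (Phi *m v) n I r ->
  exists2 y, lsq Phi (Phi *m v) I y & r = Phi *m v - Phi *m y /\ balanced (supp v) I.
Proof.
move=> ric e0 e1 K_gt0 nK eK v_sparse.
elim=> [|{}I {}r J J0 y _ [y0 y0_lsq [-> I_bal]] r_neq0 J_id J0_reg y_lsq].
  by exists 0; [exact: lsq_set0 | rewrite mulmx0 subr0 /balanced set0D set0I cards0].
exists y => //; split=> //.
by have := balanced_step ric e0 e1 v_sparse y0_lsq I_bal K_gt0 nK eK r_neq0 J_id J0_reg.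
Qed.

Theorem lemma3p6 (R : realType) (N d n : nat) (Phi : 'M[R]_(N, d))
  (v : 'cV[R]_d) (I : {set 'I_d}) (r : 'cV[R]_N) (J : {set 'I_d}) :
  (1 < n)%N ->
  RIC Phi (2 * n) ((3%:R / 100%:R) / Num.sqrt (ln (n%:R))) ->
  v != 0 -> sparse n v ->
  romp_state Phi (Phi *m v) n I r -> r != 0 ->
  identify n (Phi^T *m r) J ->
  norm2 (restrict J (Phi^T *m r)) >=
    (4%:R / 5%:R) * norm2 (restrict (supp v :\: I) v).
Proof.
move=> n_gt1; rewrite -/(romp_eps R n) => ric _ v_sparse st _ J_id.
have e0 := romp_eps_ge0 R n; have e_small := romp_eps_le R n_gt1.
have e1 : romp_eps R n <= 1 by apply: le_trans e_small _; lra.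
have [y y_lsq [r_def I_bal]] := romp_state_invariant ric e0 e1 (ltn0Sn _)
  (trunc_log2_dyadic n) (romp_eps_small R n_gt1) v_sparse st.
rewrite r_def in J_id *.
apply: le_trans _ (identify_max J_id (card_suppD I v_sparse)).
apply: le_trans _ (norm2_corr_suppD_ge ric e1 v_sparse y_lsq I_bal).
by rewrite ler_wpM2r ?norm2_ge0 //; nra.
Qed.
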